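(* Let $M$ be a singular $n\times n$ matrix with all entries in $\{-1,+1\}$. Then there exist a novel partition $\lambda$ of length at most $n$ and a vector $v\in V^{(n)}_\lambda$ with $vM=0$ (i.e. $v$ is a left null vector of $M$).
   Context: An integer partition is $\lambda=(\lambda_1,\dots,\lambda_k)$ with integers $\lambda_1\ge\dots\ge\lambda_k\ge 1$; $k$ is its length. For $v\in\mathbb{Z}^k$ let $v^{\perp B}=\{x\in\{-1,1\}^k: v\cdot x=0\}$ (the Bernoulli orthogonal complement); for a partition $\lambda$, $\lambda^{\perp B}$ means this set for the vector $(\lambda_1,\dots,\lambda_k)$. $V_\lambda\subset\mathbb{Z}^k$ is the set of vectors obtained from $(\lambda_1,\dots,\lambda_k)$ by permuting the coordinates and changing the signs of some coordinates, subject to the first coordinate being positive. For $n\ge k$, $V_\lambda^{(n)}\subset\mathbb{Z}^n$ is the set of vectors with exactly $k$ nonzero coordinates which, read in increasing order of index, form a vector of $V_\lambda$. For $I\subset\{1,\dots,m\}$, $\mathrm{Proj}_I:\{-1,1\}^m\to\{-1,1\}^{|I|}$ keeps the coordinates indexed by $I$ (in increasing order). Reduction: for partitions $\mu$ of length $m$ and $\lambda$ of length $k\le m$, write $\mu\Rightarrow\lambda$ iff there exist $I\subset\{1,\dots,m\}$ with $|I|=k$ and $v\in V_\lambda$ such that $\mathrm{Proj}_I(\mu^{\perp B})\subset v^{\perp B}$ (when $k=m$ this means $\mu^{\perp B}\subset v^{\perp B}$). Strict reduction: $\mu$ strictly reduces to $\lambda$ iff $\mu\Rightarrow\lambda$ and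 not $\lambda\Rightarrow\mu$. Equivalence: partitions $\lambda,\mu$ of the same length are equivalent iff there is $w\in V_\mu$ with $\lambda^{\perp B}=w^{\perp B}$. A partition $\lambda$ is novel iff $\lambda^{\perp B}\neq\emptyset$, there is no partition $\lambda'$ to which $\lambda$ strictly reduces, and $\lambda$ is lexicographically smallest (comparing $(\lambda_1,\lambda_2,\dots)$) among all partitions equivalent to it. *)

From HB Require Import structures.
From mathcomp Require Import all_boot all_order all_algebra.
Set Implicit Arguments. Unset Strict Implicit. Unset Printing Implicit Defensive.
Import Order.TTheory GRing.Theory Num.Theory.
Local Open Scope ring_scope.

Definition is_partition (lam : seq nat) : bool :=
  sorted geq lam && all (fun a => (0 < a)%N) lam.

Definition pvec (lam : seq nat) : seq int := [seq (a%:Z) | a <- lam].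

Definition dot (v x : seq int) : int := \sum_(p <- zip v x) p.1 * p.2.

Definition in_bperp (v x : seq int) : bool :=
  [&& size x == size v, all (fun a => (a == 1) || (a == -1)) x & dot v x == 0].

(* w belongs to V_lam: w is obtained from lam by permuting coordinates and
   changing signs of some coordinates, with first coordinate positive. *)
Definition inV (lam : seq nat) (w : seq int) : bool :=
  perm_eq [seq absz z | z <- w] lam && (0 < head 0 w).

Definition inVn (n : nat) (lam : seq nat) (w : seq int) : bool :=
  [&& size w == n, count (fun z => z != 0) w == size lam
    & inV lam [seq z <- w | z != 0]].

(* Reduction mu => lam.  The index set I subset {1..m} with |I| = k is encoded
   as a bit mask of size m with k ones; Proj_I is [mask I _]. *)
Definition reduces (mu lam : seq nat) : Prop :=
  (size lam <= size mu)%N /\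
  exists (I : bitseq) (v : seq int),
    [/\ size I = size mu, count id I = size lam, inV lam v &
        forall x : seq int, in_bperp (pvec mu) x -> in_bperp v (mask I x)].

Definition strictly_reduces (mu lam : seq nat) : Prop :=
  reduces mu lam /\ ~ reduces lam mu.

Definition equivalent (lam mu : seq nat) : Prop :=
  size lam = size mu /\
  exists w : seq int, inV mu w /\ forall x : seq int, in_bperp (pvec lam) x = in_bperp w x.

Fixpoint lexle (s t : seq nat) : bool :=
  match s, t with
  | [::], _ => true
  | _ :: _, [::] => false
  | a :: s', b :: t' => (a < b)%N || ((a == b) && lexle s' t')
  end.

Definition novel (lam : seq nat) : Prop :=
  [/\ is_partition lam,
      exists x : seq int, in_bperp (pvec lam) x,
      ~ (exists lam' : seq nat, is_partition lam' /\ strictly_reduces lam lam') &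
      forall mu : seq nat, is_partition mu -> equivalent lam mu -> lexle lam mu].

(* Call a partition lam "realizable" for M when ±lam, placed at distinct
   coordinates (a signed embedding), is a left null vector of M.  A singular M
   realizes the partition of absolute values of any nonzero left null vector.
   Realizability is inherited along reductions: each column of M, read along
   the embedding, is a Bernoulli vector orthogonal to lam, so a reduction
   lam => lam' turns the null vector for lam into one for lam'.

   Choose a realizable lam minimizing first its length and then the number of
   sign vectors NOT orthogonal to it (the measure [meas]), and among those the
   lexicographically smallest one.  A strict reduction of lam would either
   shorten it or, at equal length, keep at least as many orthogonal sign
   vectors; in the latter case the inclusion of Bernoulli complements is an
   equality, which signed permutations transport back into a reverse reduction.
   Partitions equivalent to lam have the same measure, so lexicographic
   minimality gives the last condition of novelty. *)

From HB Require Import structures.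
From mathcomp Require Import all_boot all_order all_algebra.
From Stdlib Require Import Classical.
From mathcomp Require Import zify.
Import GRing.Theory Num.Theory.
Local Open Scope ring_scope.
Set Implicit Arguments. Unset Strict Implicit.

Definition pm1 (z : int) : bool := (z == 1) || (z == -1).

Lemma pm1_mul a b : pm1 a -> pm1 b -> pm1 (a * b).
Proof.
by rewrite /pm1 => /orP [] /eqP -> /orP [] /eqP ->;
  rewrite ?mulN1r ?mul1r ?opprK ?eqxx ?orbT.
Qed.

Lemma pm1_neq0 z : pm1 z -> z != 0.
Proof. by case/orP => /eqP ->. Qed.

Lemma pm1_sqr z : pm1 z -> z * z = 1.
Proof. by case/orP => /eqP ->; rewrite ?mulN1r ?opprK ?mul1r. Qed.

Lemma absz_pm1 a b : pm1 a -> absz (a * b) = absz b.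
Proof. by case/orP => /eqP ->; rewrite ?mul1r ?mulN1r ?abszN. Qed.

(* The sign of an integer, with the convention sg 0 = 1, so that it is
   always a sign and |z| = sg z * z. *)
Definition sg (z : int) : int := if z < 0 then -1 else 1.

Lemma pm1_sg z : pm1 (sg z).
Proof. by rewrite /pm1 /sg; case: ifP; rewrite eqxx ?orbT. Qed.

Lemma abs_sg z : (absz z)%:Z = sg z * z.
Proof.
rewrite /sg; case: ltrP => Hz; first by rewrite ltz0_abs // mulN1r.
by rewrite gez0_abs // mul1r.
Qed.

Lemma dotE (a x : seq int) : size a = size x ->
  dot a x = \sum_(i < size a) a`_i * x`_i.
Proof.
move=> Hs; rewrite /dot -{1}(mkseq_nth 0 a) -{1}(mkseq_nth 0 x) -Hs.
rewrite /mkseq zip_map big_map.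
have -> : iota 0 (size a) = index_iota 0 (size a) by rewrite /index_iota subn0.
by rewrite big_mkord.
Qed.

Lemma sum_perm_iota (F : nat -> int) (Is : seq nat) k :
  perm_eq Is (iota 0 k) -> \sum_(j < k) F j = \sum_(l < k) F (nth 0%N Is l).
Proof.
move=> HIs; have Hs : size Is = k by rewrite (perm_size HIs) size_iota.
rewrite -(big_mkord (fun _ => true)) /index_iota subn0 -(perm_big _ HIs).
by rewrite (big_nth 0%N) Hs (big_mkord (fun _ => true)).
Qed.

Lemma dot_scale c (w x : seq int) : dot [seq c * z | z <- w] x = c * dot w x.
Proof.
elim: w x => [|a w IH] [|b x]; rewrite /dot /= ?big_nil ?mulr0 //.
by rewrite !big_cons -!/(dot _ _) IH mulrDr mulrA.
Qed.

Lemma bperp_scale c (w x : seq int) : pm1 c ->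
  in_bperp [seq c * z | z <- w] x = in_bperp w x.
Proof.
by move=> Hc; rewrite /in_bperp size_map dot_scale mulf_eq0 (negbTE (pm1_neq0 Hc)).
Qed.

Fixpoint signs (k : nat) : seq (seq int) :=
  if k is k'.+1 then [seq 1 :: s | s <- signs k'] ++ [seq -1 :: s | s <- signs k']
  else [:: [::]].

Lemma mem_signs k x : (x \in signs k) = (size x == k) && all pm1 x.
Proof.
elim: k x => [|k IH] [|a x] //=; first by rewrite mem_cat; apply/negP => /orP [] /mapP [].
rewrite mem_cat eqSS; apply/idP/idP.
  by case/orP => /mapP [s Hs [-> ->]]; move: Hs; rewrite IH => /andP [-> ->];
    rewrite /pm1 eqxx ?orbT.
case/andP => Hs /andP [/orP [] /eqP -> Hx]; apply/orP; [left | right];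
  by apply/mapP; exists x => //; rewrite IH Hs.
Qed.

Lemma uniq_signs k : uniq (signs k).
Proof.
elim: k => //= k IH; rewrite cat_uniq !map_inj_uniq ?IH /=; try by move=> s t [].
by rewrite andbT; apply/hasPn => z /mapP [s _ ->]; apply/negP => /mapP [t _ []] /eqP.
Qed.

Lemma size_signs k : size (signs k) = (2 ^ k)%N.
Proof. by elim: k => //= k IH; rewrite size_cat !size_map IH expnS mul2n addnn. Qed.

Lemma bperp_signs w x : in_bperp w x -> x \in signs (size w).
Proof. by case/and3P => Hs Ha _; rewrite mem_signs Hs Ha. Qed.

Definition cnt (w : seq int) : nat := count (in_bperp w) (signs (size w)).

Lemma cnt_le_pow w : (cnt w <= 2 ^ size w)%N.
Proof. by rewrite /cnt -size_signs count_size. Qed.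

Lemma cnt_sub a b : size a = size b ->
  (forall x, in_bperp a x -> in_bperp b x) -> (cnt a <= cnt b)%N.
Proof. by move=> Hs H; rewrite /cnt Hs; apply: sub_count => x; apply: H. Qed.

Lemma count_sub_eq (T : eqType) (s : seq T) (a b : pred T) :
  subpred a b -> count a s = count b s -> {in s, subpred b a}.
Proof.
move=> Hab; elim: s => //= z s IH Hc y.
have Hs := sub_count Hab s.
have Hz : (nat_of_bool (a z) <= b z)%N by case Ha: (a z) => //; rewrite (Hab _ Ha).
have [Es Ez] : count a s = count b s /\ nat_of_bool (a z) = b z by lia.
rewrite in_cons => /orP [/eqP -> | Hy Hb]; last exact: IH.
by case: (a z) (b z) Ez => [] [].
Qed.

Lemma cnt_eq a b : size a = size b ->
  (forall x, in_bperp a x -> in_bperp b x) -> cnt a = cnt b ->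
  forall x, in_bperp b x -> in_bperp a x.
Proof.
move=> Hs Hab Hc x Hb; rewrite /cnt Hs in Hc.
exact: (count_sub_eq Hab Hc (bperp_signs Hb)).
Qed.

Definition sperm (Is : seq nat) (e : nat -> int) (x : seq int) : seq int :=
  [seq e i * x`_i | i <- Is].

Section SignedPermutation.
Variables (k : nat) (Is : seq nat) (e : nat -> int).
Hypothesis HIs : perm_eq Is (iota 0 k).
Hypothesis He : forall i, pm1 (e i).

Let mem_Is i : (i \in Is) = (i < k)%N.
Proof. by rewrite (perm_mem HIs) mem_iota. Qed.

Lemma size_sperm x : size (sperm Is e x) = k.
Proof. by rewrite size_map (perm_size HIs) size_iota. Qed.

Lemma sperm_absz x : size x = k ->
  perm_eq [seq absz z | z <- sperm Is e x] [seq absz z | z <- x].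
Proof.
move=> Hx; rewrite -map_comp -{2}(mkseq_nth 0 x) Hx /mkseq -map_comp.
under eq_map do rewrite /= absz_pm1 //.
exact: perm_map.
Qed.

Lemma sperm_dot a x : size a = k -> size x = k ->
  dot (sperm Is e a) (sperm Is e x) = dot a x.
Proof.
move=> Ha Hx; rewrite dotE; last by rewrite !size_sperm.
rewrite dotE ?Ha ?Hx // size_sperm (sum_perm_iota (fun i => a`_i * x`_i) HIs).
apply: eq_bigr => l _; have Hl : (l < size Is)%N by rewrite (perm_size HIs) size_iota.
by rewrite !(nth_map 0%N) // mulrACA pm1_sqr // mul1r.
Qed.

Lemma sperm_signs x : x \in signs k -> sperm Is e x \in signs k.
Proof.
rewrite !mem_signs size_sperm eqxx => /andP [/eqP Hx /allP Hpm].
apply/allP => _ /mapP [i Hi ->]; apply: pm1_mul => //.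
by apply: Hpm; rewrite mem_nth // Hx -mem_Is.
Qed.

Lemma sperm_bperp a x : size a = k -> x \in signs k ->
  in_bperp (sperm Is e a) (sperm Is e x) = in_bperp a x.
Proof.
move=> Ha Hx; move: (Hx) (sperm_signs Hx).
rewrite !mem_signs => /andP [/eqP Hsx Hpx] /andP [_ Hpx'].
by rewrite /in_bperp sperm_dot // !size_sperm Hsx Ha Hpx Hpx' !eqxx.
Qed.

Lemma sperm_inj : {in signs k &, injective (sperm Is e)}.
Proof.
move=> x y; rewrite !mem_signs => /andP [/eqP Hx _] /andP [/eqP Hy _] E.
apply: (@eq_from_nth _ 0); rewrite ?Hx ?Hy // => j Hj.
have Hi : (index j Is < size Is)%N by rewrite index_mem mem_Is.
have := congr1 (nth 0 ^~ (index j Is)) E; rewrite !(nth_map 0%N) // nth_index ?mem_Is //.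
by move=> /(congr1 (fun z => e j * z)); rewrite !mulrA pm1_sqr // !mul1r.
Qed.

Lemma perm_sperm_signs : perm_eq [seq sperm Is e x | x <- signs k] (signs k).
Proof.
have Hu : uniq [seq sperm Is e x | x <- signs k].
  by rewrite map_inj_in_uniq ?uniq_signs //; exact: sperm_inj.
have Hsub : {subset [seq sperm Is e x | x <- signs k] <= signs k}.
  by move=> _ /mapP [x Hx ->]; exact: sperm_signs.
have Hsz : (size (signs k) <= size [seq sperm Is e x | x <- signs k])%N.
  by rewrite size_map.
have [_ Heq] := uniq_min_size Hu Hsub Hsz.
exact: uniq_perm Hu (uniq_signs k) Heq.
Qed.

Lemma cnt_sperm a : size a = k -> cnt (sperm Is e a) = cnt a.
Proof.
move=> Ha; rewrite /cnt size_sperm Ha -(permP perm_sperm_signs) count_map.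
by apply: eq_in_count => x Hx; rewrite /= sperm_bperp.
Qed.

Lemma sperm_bperp_sub a c : size a = k -> size c = k ->
  (forall x, in_bperp a x -> in_bperp c x) ->
  forall y, in_bperp (sperm Is e a) y -> in_bperp (sperm Is e c) y.
Proof.
move=> Ha Hc Hac y Hy.
have := bperp_signs Hy; rewrite size_sperm -(perm_mem perm_sperm_signs).
case/mapP=> x Hx Ey; move: Hy; rewrite Ey !sperm_bperp //; exact: Hac.
Qed.
End SignedPermutation.

Lemma abs_sperm (u : seq int) (lam : seq nat) :
  perm_eq [seq absz z | z <- u] lam ->
  exists2 Is, perm_eq Is (iota 0 (size u)) &
    pvec lam = sperm Is (fun i => sg u`_i) u.
Proof.
rewrite perm_sym => /(perm_iotaP 0%N) [Is HIs ->]; rewrite size_map in HIs.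
exists Is => //; rewrite /pvec -map_comp; apply/eq_in_map => i.
rewrite (perm_mem HIs) mem_iota /= => Hi.
by rewrite (nth_map 0) // abs_sg.
Qed.

Lemma pvecK lam : [seq absz z | z <- pvec lam] = lam.
Proof. by rewrite -map_comp map_id_in. Qed.

Definition orient (w : seq int) : seq int := [seq sg (head 0 w) * z | z <- w].

Lemma bperp_orient w x : in_bperp (orient w) x = in_bperp w x.
Proof. exact/bperp_scale/pm1_sg. Qed.

Lemma inV_orient lam w : is_partition lam -> (0 < size lam)%N ->
  perm_eq [seq absz z | z <- w] lam -> inV lam (orient w).
Proof.
case/andP=> _ /allP Hpos Hsz Hp; rewrite /inV.
have -> : [seq absz z | z <- orient w] = [seq absz z | z <- w].
  by rewrite -map_comp; apply: eq_map => z /=; rewrite absz_pm1 ?pm1_sg.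
rewrite Hp; case: w Hp => [|h w] Hp /=; first by rewrite -(perm_size Hp) in Hsz.
by rewrite -abs_sg ltz_nat Hpos // -(perm_mem Hp) mem_head.
Qed.

Definition embeds n (r : 'I_n -> int) (u : seq int) : Prop :=
  exists (h : nat -> 'I_n) (e : nat -> int),
  [/\ forall i j, (i < size u)%N -> (j < size u)%N -> h i = h j -> i = j,
      forall j, pm1 (e j) &
      forall p, r p = \sum_(j < size u) (if h j == p then e j * u`_j else 0)].

Definition left_null n (M : 'M[int]_n) (r : 'I_n -> int) : Prop :=
  forall c, \sum_p r p * M p c = 0.

Lemma left_nullE n (M : 'M[int]_n) (v : 'rV[int]_n) :
  v *m M = 0 <-> left_null M (v 0).
Proof.
split=> [/matrixP H c | H]; first by move: (H 0 c); rewrite !mxE.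
by apply/matrixP => i c; rewrite !mxE (ord1 i); exact: H.
Qed.

Section Embedding.
Variables (n : nat) (r : 'I_n -> int) (u : seq int) (h : nat -> 'I_n) (e : nat -> int).
Hypothesis Hr : forall p, r p = \sum_(j < size u) (if h j == p then e j * u`_j else 0).

Lemma embed_dot (c : 'I_n -> int) :
  \sum_p r p * c p = dot u [seq e j * c (h j) | j <- iota 0 (size u)].
Proof.
rewrite dotE ?size_map ?size_iota //.
under eq_bigr do rewrite Hr mulr_suml.
rewrite exchange_big; apply: eq_bigr => j _ /=.
rewrite (nth_map 0%N) ?size_iota // nth_iota // add0n.
rewrite (bigD1 (h j)) //= eqxx big1 ?addr0; first by rewrite mulrCA mulrA.
by move=> p; rewrite eq_sym => /negbTE ->; rewrite mul0r.
Qed.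

Lemma column_bperp (M : 'M[int]_n) c :
  (forall i j, pm1 (M i j)) -> (forall j, pm1 (e j)) -> left_null M r ->
  in_bperp u [seq e j * M (h j) c | j <- iota 0 (size u)].
Proof.
move=> HM He Hz; apply/and3P; split.
- by rewrite size_map size_iota.
- by apply/allP => _ /mapP [j _ ->]; exact: pm1_mul.
- by rewrite -(embed_dot (M^~ c)) Hz.
Qed.
End Embedding.

Lemma embeds_sperm n (r : 'I_n -> int) u Is s :
  embeds r u -> perm_eq Is (iota 0 (size u)) -> (forall i, pm1 (s i)) ->
  embeds r (sperm Is s u).
Proof.
case=> h [e [Hinj He Hr]] HIs Hs.
have HsIs : size Is = size u by rewrite (perm_size HIs) size_iota.
have HIs_lt l : (l < size u)%N -> (nth 0%N Is l < size u)%N.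
  move=> Hl; have : nth 0%N Is l \in Is by rewrite mem_nth ?HsIs.
  by rewrite (perm_mem HIs) mem_iota.
have HuIs : uniq Is by rewrite (perm_uniq HIs) iota_uniq.
exists (fun l => h (nth 0%N Is l)), (fun l => e (nth 0%N Is l) * s (nth 0%N Is l)).
rewrite (size_sperm _ HIs); split.
- move=> i j Hi Hj /(Hinj _ _ (HIs_lt _ Hi) (HIs_lt _ Hj)) /eqP.
  by rewrite nth_uniq ?HsIs // => /eqP.
- by move=> j; apply: pm1_mul.
- move=> p; rewrite Hr (sum_perm_iota (fun j => if h j == p then e j * u`_j else 0) HIs).
  apply: eq_bigr => l _; case: ifP => // _.
  by rewrite (nth_map 0%N) ?HsIs // mulrA -(mulrA (e _)) pm1_sqr // mulr1.
Qed.

Lemma embeds_reduce n (M : 'M[int]_n) r a w (I : bitseq) :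
  (forall i j, pm1 (M i j)) -> embeds r a -> left_null M r ->
  size I = size a -> count id I = size w ->
  (forall x, in_bperp a x -> in_bperp w (mask I x)) ->
  exists r' : 'I_n -> int, embeds r' w /\ left_null M r'.
Proof.
move=> HM [h [e [Hinj He Hr]]] Hz HsI HcI Hred.
pose G := mask I (iota 0 (size a)).
have HG : size G = size w by rewrite size_mask // size_iota.
have HG_lt i : (i < size w)%N -> (nth 0%N G i < size a)%N.
  move=> Hi; have : nth 0%N G i \in G by rewrite mem_nth // HG.
  by move/mem_mask; rewrite mem_iota.
pose r' p := \sum_(i < size w)
  (if h (nth 0%N G i) == p then e (nth 0%N G i) * w`_i else 0).
have Hr' : embeds r' w.
  exists (fun i => h (nth 0%N G i)), (fun i => e (nth 0%N G i)); split => //.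
  move=> i j Hi Hj /(Hinj _ _ (HG_lt _ Hi) (HG_lt _ Hj)) /eqP.
  by rewrite nth_uniq ?HG ?mask_uniq ?iota_uniq // => /eqP.
exists r'; split => // c.
rewrite (@embed_dot _ r' w (fun i => h (nth 0%N G i)) (fun i => e (nth 0%N G i))) //.
have /Hred /and3P [_ _ /eqP] := column_bperp Hr c HM He Hz.
by rewrite -map_mask -/G -{1}(mkseq_nth 0%N G) HG /mkseq -map_comp.
Qed.

Lemma sum_pick n k (h : nat -> 'I_n) (F : nat -> int) j0 :
  (forall i j, (i < k)%N -> (j < k)%N -> h i = h j -> i = j) -> (j0 < k)%N ->
  \sum_(j < k) (if h j == h j0 then F j else 0) = F j0.
Proof.
move=> Hinj Hj0; rewrite (bigD1 (Ordinal Hj0)) //= eqxx big1 ?addr0 // => i Hi.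
case: eqP => // /(Hinj _ _ (ltn_ord i) Hj0) E.
by move: Hi; rewrite -val_eqE /= E eqxx.
Qed.

Lemma sum_none n k (h : nat -> 'I_n) (F : nat -> int) p :
  (forall j, (j < k)%N -> h j != p) ->
  \sum_(j < k) (if h j == p then F j else 0) = 0.
Proof. by move=> H; rewrite big1 // => i _; rewrite (negbTE (H _ (ltn_ord i))). Qed.

Definition nonzeros n (r : 'I_n -> int) : seq int :=
  [seq z <- [seq r p | p <- enum 'I_n] | z != 0].

(* Every vector embeds its own nonzero entries (the coordinate p0 only
   witnesses that 'I_n is inhabited). *)
Lemma embeds_nonzeros n (r : 'I_n -> int) (p0 : 'I_n) : embeds r (nonzeros r).
Proof.
set A := [seq p <- enum 'I_n | r p != 0].
have HA : nonzeros r = [seq r p | p <- A] by rewrite /nonzeros filter_map.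
have HuA : uniq A by rewrite filter_uniq // enum_uniq.
have Hsz : size (nonzeros r) = size A by rewrite HA size_map.
have Hinj i j : (i < size (nonzeros r))%N -> (j < size (nonzeros r))%N ->
    nth p0 A i = nth p0 A j -> i = j.
  by rewrite Hsz => Hi Hj /eqP; rewrite nth_uniq // => /eqP.
exists (nth p0 A), (fun _ => 1); split => [||p]; [exact: Hinj | by rewrite /pm1 eqxx |].
pose F j := 1 * (nonzeros r)`_j.
case: (boolP (p \in A)) => Hp.
  rewrite -{2}(nth_index p0 Hp) (sum_pick F Hinj) ?Hsz ?index_mem //.
  by rewrite /F mul1r HA (nth_map p0) ?index_mem // nth_index.
rewrite (sum_none F).
  by move: Hp; rewrite mem_filter mem_enum andbT negbK => /eqP.
by move=> j; rewrite Hsz => Hj; apply: contraNneq Hp => <-; rewrite mem_nth.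
Qed.

Lemma nonzeros_embeds n (r : 'I_n -> int) u :
  embeds r u -> all (fun z => z != 0) u ->
  perm_eq [seq absz z | z <- nonzeros r] [seq absz z | z <- u].
Proof.
case=> h [e [Hinj He Hr]] Hu.
have Hval j : (j < size u)%N -> r (h j) = e j * u`_j.
  by move=> Hj; rewrite Hr (sum_pick (fun j => e j * u`_j) Hinj Hj).
have Hnz j : (j < size u)%N -> r (h j) != 0.
  move=> Hj; rewrite Hval // mulf_eq0 negb_or pm1_neq0 //=.
  exact: (allP Hu) (mem_nth 0 Hj).
set A := [seq p <- enum 'I_n | r p != 0].
set B := [seq h j | j <- iota 0 (size u)].
have HAB : perm_eq A B.
  apply: uniq_perm; first by rewrite filter_uniq // enum_uniq.
    rewrite map_inj_in_uniq ?iota_uniq // => i j.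
    by rewrite !mem_iota /= !add0n; exact: Hinj.
  move=> p; rewrite mem_filter mem_enum andbT; apply/idP/idP => [Hp | /mapP [j]].
    apply: contraR Hp => HpB; rewrite Hr (sum_none (fun j => e j * u`_j)) // => j Hj.
    by apply: contraNneq HpB => <-; rewrite map_f // mem_iota.
  by rewrite mem_iota /= add0n => Hj ->; exact: Hnz.
have HB : [seq absz (r p) | p <- B] = [seq absz z | z <- u].
  rewrite -{1}(mkseq_nth 0 u) /mkseq -!map_comp; apply/eq_in_map => j.
  by rewrite mem_iota /= add0n => Hj /=; rewrite Hval // absz_pm1.
by rewrite /nonzeros filter_map -/A -map_comp -HB; exact: perm_map.
Qed.

Lemma pvec_neq0 lam : is_partition lam -> all (fun z => z != 0) (pvec lam).
Proof.
case/andP=> _ /allP Hpos; apply/allP => _ /mapP [a /Hpos Ha ->].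
by rewrite eqz_nat -lt0n.
Qed.

Definition realizable n (M : 'M[int]_n) (lam : seq nat) : Prop :=
  [/\ is_partition lam, (0 < size lam)%N, (size lam <= n)%N &
      exists r : 'I_n -> int, embeds r (pvec lam) /\ left_null M r].

Section Realizable.
Variables (n : nat) (M : 'M[int]_n).

Lemma realizable_embeds r w lam :
  is_partition lam -> (0 < size lam)%N -> (size lam <= n)%N ->
  perm_eq [seq absz z | z <- w] lam -> embeds r w -> left_null M r ->
  realizable M lam.
Proof.
move=> Hpart Hpos Hsz Hp Hw Hz; split => //; exists r; split => //.
have [Is HIs ->] := abs_sperm Hp.
by apply: embeds_sperm => // i; exact: pm1_sg.
Qed.

Lemma realizable_det0 : \det M = 0 -> exists lam, realizable M lam.
Proof.
move/eqP/det0P=> [v Hv0 /left_nullE HvM].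
have [p0 Hp0] : exists p, v 0 p != 0.
  apply/existsP; apply: contraR Hv0; rewrite negb_exists => /forallP H.
  apply/eqP/matrixP => i p; rewrite mxE (ord1 i).
  by apply/eqP; rewrite -[_ == _]negbK H.
set u := nonzeros (v 0).
have Hu : all (fun z => z != 0) u by apply/allP => z; rewrite mem_filter => /andP [].
have Hlam : perm_eq [seq absz z | z <- u] (sort geq [seq absz z | z <- u]).
  by rewrite perm_sym perm_sort.
exists (sort geq [seq absz z | z <- u]).
apply: (realizable_embeds (r := v 0) _ _ _ Hlam (embeds_nonzeros (v 0) p0)) => //.
- apply/andP; split; first by apply: sort_sorted => a b; exact: leq_total.
  apply/allP => a; rewrite mem_sort => /mapP [z Hz ->].
  by rewrite absz_gt0; exact: (allP Hu).
- rewrite size_sort size_map -has_predT; apply/hasP; exists (v 0 p0) => //.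
  by rewrite mem_filter Hp0 map_f // mem_enum.
- rewrite size_sort size_map size_filter.
  by apply: leq_trans (count_size _ _) _; rewrite size_map size_enum_ord.
Qed.

Lemma realizable_reduces lam lam' : (forall i j, pm1 (M i j)) ->
  realizable M lam -> reduces lam lam' -> is_partition lam' -> realizable M lam'.
Proof.
move=> HM [_ _ Hn [r [Hr Hz]]] [Hsz [I [w [HsI HcI /andP [Hp Hhead] Hred]]]] Hpart.
have Hsw : size w = size lam' by rewrite -(size_map absz) (perm_size Hp).
have [|r' [Hr' Hz']] := embeds_reduce HM Hr Hz _ (etrans HcI (esym Hsw)) Hred.
  by rewrite size_map.
apply: (realizable_embeds Hpart _ _ Hp Hr' Hz').
- by rewrite -Hsw; case: (w) Hhead.
- exact: leq_trans Hsz Hn.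
Qed.

(* A realizable partition has a nonempty Bernoulli complement: any column of
   M read along the embedding. *)
Lemma realizable_bperp lam : (forall i j, pm1 (M i j)) ->
  realizable M lam -> exists x, in_bperp (pvec lam) x.
Proof.
move=> HM [_ _ _ [r [[h [e [_ He Hr]]] Hz]]].
by eexists; exact: (column_bperp Hr (h 0%N) HM He Hz).
Qed.

Lemma realizable_row lam : realizable M lam ->
  exists v : 'rV[int]_n, inVn n lam [seq v 0 j | j <- enum 'I_n] /\ v *m M = 0.
Proof.
move=> [Hpart Hpos _ [r [Hr Hz]]].
have Hp : perm_eq [seq absz z | z <- nonzeros r] lam.
  by rewrite -{1}(pvecK lam) nonzeros_embeds // pvec_neq0.
pose s := sg (head 0 (nonzeros r)).
exists (\row_p (s * r p)); split; last first.
  apply/left_nullE => c; under eq_bigr do rewrite mxE -mulrA.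
  by rewrite -mulr_sumr Hz mulr0.
have -> : [seq (\row_p (s * r p)) 0 j | j <- enum 'I_n] =
          [seq s * z | z <- [seq r p | p <- enum 'I_n]].
  by rewrite -[in RHS]map_comp; apply: eq_map => p; rewrite /= mxE.
have Hf : [seq z <- [seq s * z | z <- [seq r p | p <- enum 'I_n]] | z != 0] =
          orient (nonzeros r).
  rewrite filter_map; congr map; apply: eq_filter => z /=.
  by rewrite mulf_eq0 (negbTE (pm1_neq0 (pm1_sg _))).
apply/and3P; split.
- by rewrite !size_map -enumT size_enum_ord.
- by rewrite -size_filter Hf size_map -(perm_size Hp) size_map.
- by rewrite Hf inV_orient.
Qed.
End Realizable.

Lemma cnt_inV lam w : perm_eq [seq absz z | z <- w] lam -> cnt w = cnt (pvec lam).
Proof.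
move=> Hp; have [Is HIs ->] := abs_sperm Hp.
by rewrite (cnt_sperm HIs) // => i; exact: pm1_sg.
Qed.

Lemma reduces_full lam mu w : size mu = size lam -> inV mu w ->
  (forall x, in_bperp (pvec lam) x -> in_bperp w x) -> reduces lam mu.
Proof.
move=> Hs Hw H; split; first by rewrite Hs.
exists (nseq (size lam) true), w.
split => //; rewrite ?size_nseq ?count_nseq ?mul1n // => x Hx.
by rewrite mask_true; [exact: H | case/and3P: Hx => /eqP ->; rewrite size_map].
Qed.

Lemma reduces_same_size lam mu : reduces lam mu -> size mu = size lam ->
  exists2 w, inV mu w & forall x, in_bperp (pvec lam) x -> in_bperp w x.
Proof.
move=> [_ [I [w [HsI HcI Hw Hred]]]] Hs; exists w => // x Hx.
have Hsw : size w = size mu by case/andP: Hw => /perm_size; rewrite size_map.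
have /all_pred1P HI : all (pred1 true) I.
  by rewrite (@eq_all _ _ id) ?all_count ?HcI ?HsI ?Hsw ?Hs // => -[].
move: (Hred x Hx); rewrite HI mask_true // HsI.
by case/and3P: Hx => /eqP ->; rewrite size_map.
Qed.

(* An equal-length reduction lam => mu which does not lose orthogonal sign
   vectors is an equivalence, hence can be reversed. *)
Lemma reduces_back lam mu : is_partition lam -> (0 < size lam)%N ->
  reduces lam mu -> size mu = size lam -> (cnt (pvec mu) <= cnt (pvec lam))%N ->
  reduces mu lam.
Proof.
move=> Hpart Hpos Hred Hsz Hcnt.
have [w /andP [Hp _] Hsub] := reduces_same_size Hred Hsz.
have Hsw : size (pvec lam) = size w by rewrite size_map -Hsz -(perm_size Hp) size_map.
have Hce : cnt (pvec lam) = cnt w.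
  by apply/eqP; rewrite eqn_leq cnt_sub //= (cnt_inV Hp).
have Hback := cnt_eq Hsw Hsub Hce.
have [Is HIs Hmu] := abs_sperm Hp.
have Hs : forall i, pm1 (sg w`_i) by move=> i; exact: pm1_sg.
apply: (@reduces_full mu lam (orient (sperm Is (fun i => sg w`_i) (pvec lam)))).
- by rewrite Hsz.
- apply: inV_orient => //.
  by rewrite -{2}(pvecK lam) (sperm_absz HIs).
- move=> y; rewrite Hmu bperp_orient; exact: (sperm_bperp_sub HIs Hs).
Qed.

Lemma nat_min (P : nat -> Prop) : (exists n, P n) ->
  exists m, P m /\ forall n, P n -> (m <= n)%N.
Proof.
move=> [n Hn]; apply: NNPP => H.
suff : forall k j, (j <= k)%N -> ~ P j by move/(_ n n (leqnn n)).
elim=> [|k IH] j Hj Pj; apply: H; exists j; split => // m Pm.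
  by move: Hj; rewrite leqn0 => /eqP ->.
case: (leqP j m) => // Hmj; exfalso; apply: (IH m) Pm.
by rewrite -ltnS; exact: leq_trans Hmj Hj.
Qed.

Lemma lexmin k (Q : seq nat -> Prop) : (forall t, Q t -> size t = k) ->
  (exists t, Q t) -> exists s, Q s /\ forall t, Q t -> lexle s t.
Proof.
elim: k Q => [|k IH] Q Hs [t0 Ht0].
  by exists t0; split => // t _; move: (Hs _ Ht0); case: t0 Ht0.
have Hex : exists a, exists t, Q (a :: t).
  by have := Hs _ Ht0; move: Ht0; case: t0 => // a t H _; exists a, t.
have [a0 [[s0 Ha0] Hmin]] := @nat_min (fun a => exists t, Q (a :: t)) Hex.
have [s' [Hs' Hmin']] := IH (fun t => Q (a0 :: t))
  (fun t Ht => eq_add_S _ _ (Hs _ Ht)) (ex_intro _ s0 Ha0).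
exists (a0 :: s'); split => // t Ht.
have := Hs _ Ht; move: Ht; case: t => [|b t'] //= Ht _.
have Hab : (a0 <= b)%N by apply: Hmin; exists t'.
rewrite leq_eqVlt in Hab; case/orP: Hab => [/eqP Eab | ->] //.
by rewrite Eab ltnn eqxx /=; apply: Hmin'; rewrite -Eab in Ht.
Qed.

(* The quantity minimized: first the length of lam, then the number of sign
   vectors NOT orthogonal to it (for lengths at most n). *)
Definition meas n (lam : seq nat) : nat :=
  (size lam * (2 ^ n).+1 + (2 ^ n - cnt (pvec lam)))%N.

Section Optimal.
Variables (n : nat) (M : 'M[int]_n).
Hypothesis HM : forall i j, pm1 (M i j).

Lemma cnt_realizable lam : realizable M lam -> (cnt (pvec lam) <= 2 ^ n)%N.
Proof.
case=> _ _ Hsz _; apply: leq_trans (cnt_le_pow _) _.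
by apply: leq_pexp2l => //; rewrite size_map.
Qed.

Lemma optimal_no_strict_reduction lam : realizable M lam ->
  (forall mu, realizable M mu -> (meas n lam <= meas n mu)%N) ->
  ~ exists lam', is_partition lam' /\ strictly_reduces lam lam'.
Proof.
move=> HS Hmin [lam' [Hpart' [Hred Hnred]]].
have HS' := realizable_reduces HM HS Hred Hpart'.
have Hm := Hmin _ HS'; have Hc := cnt_realizable HS; have Hc' := cnt_realizable HS'.
case: (HS) => Hpart Hpos _ _; case: (Hred) => Hsz _.
move: Hm; rewrite /meas; case: (ltngtP (size lam') (size lam)) => Hlt Hm.
- have : ((size lam').+1 * (2 ^ n).+1 <= size lam * (2 ^ n).+1)%N.
    by rewrite leq_mul2r Hlt orbT.
  by move: Hm; rewrite mulSn; lia.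
- by move: Hsz; rewrite leqNgt Hlt.
- apply/Hnred/reduces_back => //; move: Hm; rewrite Hlt; lia.
Qed.

Lemma optimal_equivalent lam mu : realizable M lam ->
  (forall mu, realizable M mu -> (meas n lam <= meas n mu)%N) ->
  is_partition mu -> equivalent lam mu ->
  [/\ realizable M mu, meas n mu = meas n lam & size mu = size lam].
Proof.
move=> HS Hmin Hpart [Hsz [w [Hw Heq]]].
have Hred : reduces lam mu by apply: (reduces_full (esym Hsz) Hw) => x; rewrite Heq.
have HS' := realizable_reduces HM HS Hred Hpart.
case/andP: Hw => Hp _.
have Hsw : size (pvec lam) = size w by rewrite size_map Hsz -(perm_size Hp) size_map.
have Hle : (cnt (pvec lam) <= cnt (pvec mu))%N.
  by rewrite -(cnt_inV Hp); apply: cnt_sub Hsw _ => x; rewrite Heq.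
have Hm := Hmin _ HS'.
split => //; apply/eqP; rewrite eqn_leq Hm andbT.
by move: Hm; rewrite /meas Hsz; lia.
Qed.

Lemma optimal_realizable : (exists lam, realizable M lam) ->
  exists lam, [/\ realizable M lam,
    forall mu, realizable M mu -> (meas n lam <= meas n mu)%N &
    forall mu, realizable M mu -> meas n mu = meas n lam ->
      size mu = size lam -> lexle lam mu].
Proof.
move=> [lam0 H0].
have [m [[lam1 [H1 E1]] Hmin]] :=
  @nat_min (fun m => exists lam, realizable M lam /\ meas n lam = m)
    (ex_intro _ _ (ex_intro _ lam0 (conj H0 erefl))).
have [lam [[HS Hm Hsz] Hlex]] :=
  @lexmin (size lam1) (fun t => [/\ realizable M t, meas n t = m & size t = size lam1])
    (fun t => fun '(And3 _ _ Ht) => Ht) (ex_intro _ lam1 (And3 H1 E1 erefl)).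
exists lam; split => // [mu Hmu | mu Hmu Hmmu Hszmu].
  by rewrite Hm; apply: Hmin; exists mu.
by apply: Hlex; split; rewrite ?Hmmu ?Hszmu.
Qed.
End Optimal.

Unset Implicit Arguments.

Theorem mainTheorem2 (n : nat) (M : 'M[int]_n) :
  (forall i j, (M i j == 1) || (M i j == -1)) ->
  \det M = 0 ->
  exists lam : seq nat,
    [/\ novel lam, (size lam <= n)%N &
        exists v : 'rV[int]_n,
          inVn n lam [seq v 0 j | j <- enum 'I_n] /\ v *m M = 0].
Proof.
move=> HM Hdet; have {}HM : forall i j, pm1 (M i j) := HM.
have [lam [HS Hmin Hlex]] := optimal_realizable (realizable_det0 Hdet).
have [Hpart _ Hsz _] := HS.
exists lam; split => //; last exact: realizable_row HS.
split => //.
- exact: realizable_bperp HM HS.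
- exact: (optimal_no_strict_reduction HM HS Hmin).
- move=> mu Hmu Heq; have [HSmu Hm Hs] := optimal_equivalent HM HS Hmin Hmu Heq.
  exact: Hlex HSmu Hm Hs.
Qed.
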